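(* Consider any execution of Algorithm A with $m=n$ registers. Suppose that at time $\tau$ all entries of $\mathit{REG}$ equal a quadruplet $X$ with $X.\mathit{lvl}=\mathtt{up}$ and $X.\mathit{cfl}=\mathtt{false}$, and that at some time $\tau'$ all entries of $\mathit{REG}$ equal a quadruplet $Y$ with $Y.rd\ge X.rd$. Then $Y.\mathit{val}=X.\mathit{val}$.
   Context: Quadruplets, lexicographic order: a quadruplet is $\langle rd,\mathit{lvl},\mathit{cfl},\mathit{val}\rangle$ with $rd\in\mathbb{N}$, $\mathit{lvl}\in\{\mathtt{down}<\mathtt{up}\}$, $\mathit{cfl}\in\{\mathtt{false}<\mathtt{true}\}$, $\mathit{val}$ in a totally ordered value set with a least default $\bot$; quadruplets are totally ordered lexicographically. For a nonempty finite set $T$ of quadruplets with lexicographic maximum $\langle r,\ell,c,v\rangle$, $\mathrm{sup}(T)=\langle r,\ell,\mathit{conflict}(T),v\rangle$ where $\mathit{conflict}(T)$ holds iff some element of $T$ of round $r$ has conflict field $\mathtt{true}$, or the elements of $T$ of round $r$ carry at least two distinct values. Model and Algorithm A: $n$ anonymous asynchronous processes (any number may crash) share an atomic snapshot object $\mathit{REG}[1..m]$ of multi-writer registers, each initially $\langle 0,\mathtt{down},\mathtt{false},\bot\rangle$, with atomic operations $\mathrm{snapshot}()$ and $\mathrm{write}(x,X)$; executions are interleavings of atomic steps, one per time instant. A process proposing $v$ repeats forever: $\mathit{view}\leftarrow\mathrm{snapshot}()$; then (1) if all entries equal $\langle r,\mathtt{up},\mathtt{false},w\rangle$ with $r>0$,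 it returns (decides) $w$; (2) else if all entries equal $\langle r,\mathtt{down},\mathtt{false},w\rangle$ with $r>0$, it writes $\langle r+1,\mathtt{up},\mathtt{false},w\rangle$ into $\mathit{REG}[1]$; (3) else if all entries equal $\langle r,\ell,\mathtt{true},w\rangle$ with $r>0$, it writes $\langle r+1,\mathtt{down},\mathtt{false},w\rangle$ into $\mathit{REG}[1]$; (4) otherwise it computes $S=\mathrm{sup}(\{\mathit{view}[1],\dots,\mathit{view}[m],\langle 1,\mathtt{down},\mathtt{false},v\rangle\})$, lets $x$ be the smallest index with $\mathit{view}[x]\neq S$, and writes $S$ into $\mathit{REG}[x]$. *)

(* Model of Algorithm A (anonymous consensus from an atomic
   snapshot object REG[1..m]), here with m = n registers, indexed by 'I_n
   (paper index k+1 = Rocq index k). *)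
From HB Require Import structures.
From mathcomp Require Import all_boot all_order.
Set Implicit Arguments. Unset Strict Implicit. Unset Printing Implicit Defensive.
Import Order.TTheory.
Local Open Scope order_scope.

Section Algo.
Variables (d : Order.disp_t) (V : orderType d) (bot : V).

Definition quad := (nat * bool * bool * V)%type.
Definition mkq (r : nat) (l c : bool) (v : V) : quad := (r, l, c, v).
Definition rd (q : quad) : nat := q.1.1.1.
Definition lvl (q : quad) : bool := q.1.1.2.
Definition cfl (q : quad) : bool := q.1.2.
Definition qval (q : quad) : V := q.2.
Definition down := false.
Definition up := true.

Definition qlt (a b : quad) : bool :=
  (rd a < rd b)%N ||
  ((rd a == rd b) &&
   ((~~ lvl a && lvl b) ||
    ((lvl a == lvl b) &&
     ((~~ cfl a && cfl b) ||
      ((cfl a == cfl b) && (qval a < qval b)))))).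

Definition qmax (a b : quad) : quad := if qlt a b then b else a.

(* sup of the nonempty finite set {h} \cup t *)
Definition qsup (h : quad) (t : seq quad) : quad :=
  let mx := foldl qmax h t in
  let rs := [seq q <- h :: t | rd q == rd mx] in
  let conflict :=
    has cfl rs || has (fun q1 => has (fun q2 => qval q1 != qval q2) rs) rs in
  mkq (rd mx) (lvl mx) conflict (qval mx).

Definition init_quad : quad := mkq 0 down false bot.

Variable n : nat.

Definition regs := 'I_n -> quad.

Definition common (view : regs) : option quad :=
  let vs := [seq view i | i <- enum 'I_n] in
  match vs with
  | [::] => None
  | q :: _ => if all (fun q' => q' == q) vs then Some q else None
  end.

Inductive pstate :=
| Snap                          (* next step: snapshot *)
| Wr of nat & quad              (* next step: write quad into REG[index] *)
| Decided of V.

Definition after_snapshot (v : V) (view : regs) : pstate :=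
  match common view with
  | Some q =>
      if (0 < rd q)%N && lvl q && ~~ cfl q then Decided (qval q)
      else if (0 < rd q)%N && ~~ lvl q && ~~ cfl q then
        Wr 0 (mkq (rd q).+1 up false (qval q))
      else if (0 < rd q)%N && cfl q then
        Wr 0 (mkq (rd q).+1 down false (qval q))
      else
        let S := qsup (mkq 1 down false v) [seq view i | i <- enum 'I_n] in
        Wr (find (fun i : 'I_n => view i != S) (enum 'I_n)) S
  | None =>
      let S := qsup (mkq 1 down false v) [seq view i | i <- enum 'I_n] in
      Wr (find (fun i : 'I_n => view i != S) (enum 'I_n)) S
  end.

Record config := Config { REG : regs; PC : 'I_n -> pstate }.

Definition init_config : config :=
  Config (fun _ => init_quad) (fun _ => Snap).

Definition step (prop : 'I_n -> V) (p : 'I_n) (c : config) : config :=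
  match PC c p with
  | Snap =>
      Config (REG c)
             (fun j => if j == p then after_snapshot (prop p) (REG c) else PC c j)
  | Wr x q =>
      Config (fun i => if nat_of_ord i == x then q else REG c i)
             (fun j => if j == p then Snap else PC c j)
  | Decided _ => c
  end.

(* configuration at time t of the execution where at time instant t the
   process sched t takes a step (crashed processes are simply never
   scheduled again; steps of decided processes are no-ops) *)
Fixpoint config_at (prop : 'I_n -> V) (sched : nat -> 'I_n) (t : nat) : config :=
  match t with
  | 0 => init_config
  | t'.+1 => step prop (sched t') (config_at prop sched t')
  end.

End Algo.

(* Call a predicate P on quadruplets snapshot-closed when every quadruplet a
   process writes after a snapshot in which some register satisfies P
   satisfies P as well.  Once all n registers satisfy such a P, the pending
   writes violating P stay strictly fewer than the registers satisfying P: a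
   write destroys at most one good register and is consumed by doing so.
   Since m = n, every later configuration with all registers equal has its
   common value in P.  Both "round > k, or round k and up" and "round > k, or
   round k with a conflict or with value w" are snapshot-closed.

   A uniform quadruplet of level up, or of round at least 2, descends from an
   earlier uniform configuration of the previous round with the same value,
   which is down and conflict-free in the level-up case.

   Let Y be uniform after X with rd Y >= rd X.  If rd Y = rd X, then Y is up
   by the first predicate, so X and Y descend from uniform conflict-free
   quadruplets of the same round, whose values agree by the second predicate.
   If rd Y > rd X, induct along the origin of Y.  Uniform configurations
   before tau are handled by the second predicate directly. *)
From HB Require Import structures.
From mathcomp Require Import all_boot all_order.
Import Order.TTheory.
Local Open Scope order_scope.

Section QuadOrder.
Set Implicit Arguments. Unset Strict Implicit.
Local Open Scope nat_scope.
Variables (d : Order.disp_t) (V : orderType d).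
Local Notation Q := (quad V).

(* sup recomputes the conflict flag, so only the (rd, lvl) prefix of the
   lexicographic maximum is guaranteed to dominate the arguments. *)
Definition rdlvl_le (a b : Q) := (rd a < rd b) || (rd a == rd b) && (lvl a ==> lvl b).

Lemma rdlvl_le_refl a : rdlvl_le a a.
Proof. by rewrite /rdlvl_le eqxx implybb orbT. Qed.

Lemma rdlvl_le_trans a b c : rdlvl_le a b -> rdlvl_le b c -> rdlvl_le a c.
Proof.
rewrite /rdlvl_le; case/orP => [ab|/andP[/eqP -> lab]].
  by case/orP => [/(ltn_trans ab) ->|/andP[/eqP <- _]]; rewrite ?ab.
case/orP => [->//|/andP[-> lbc]]; rewrite orbC /=.
by move: lab lbc; case: (lvl a); case: (lvl b); case: (lvl c).
Qed.

Lemma rdlvl_le_qmax a b : rdlvl_le a (qmax a b) && rdlvl_le b (qmax a b).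
Proof.
rewrite /qmax /qlt /rdlvl_le.
case: (ltngtP (rd a) (rd b)) => E /=.
- by rewrite E eqxx !implybb !orbT.
- by rewrite E ltnn eqxx implybb.
- by case: ifP; rewrite E ltnn eqxx /= implybb ?andbT //;
    case: (lvl a); case: (lvl b).
Qed.

Lemma foldl_qmax_mem h (t : seq Q) : foldl (@qmax _ V) h t \in h :: t.
Proof.
elim: t h => [|y t IH] h /=; first by rewrite inE.
have := IH (qmax h y); rewrite !inE; case/orP => [/eqP ->|->]; last by rewrite !orbT.
by rewrite /qmax; case: ifP => _; rewrite eqxx ?orbT.
Qed.

Lemma rdlvl_le_foldl_qmax h (t : seq Q) x :
  x \in h :: t -> rdlvl_le x (foldl (@qmax _ V) h t).
Proof.
elim: t h x => [|y t IH] h x /=; first by rewrite inE => /eqP ->; apply: rdlvl_le_refl.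
have /andP[hM yM] := rdlvl_le_qmax h y.
have IHM := IH (qmax h y) (qmax h y) (mem_head _ _).
rewrite !inE => /orP[/eqP ->|/orP[/eqP ->|xt]].
- exact: rdlvl_le_trans hM IHM.
- exact: rdlvl_le_trans yM IHM.
- by apply: IH; rewrite inE xt orbT.
Qed.

Definition past_rd_val k (w : V) (q : Q) :=
  (k < rd q) || (rd q == k) && (cfl q || (qval q == w)).

Definition past_rd_up k (q : Q) := (k < rd q) || (rd q == k) && lvl q.

Lemma qsupE h (t : seq Q) :
  let M := foldl (@qmax _ V) h t in
  let rs := [seq q <- h :: t | rd q == rd M] in
  [/\ rd (qsup h t) = rd M, lvl (qsup h t) = lvl M, qval (qsup h t) = qval M &
      cfl (qsup h t) =
        has (@cfl _ V) rs || has (fun q1 => has (fun q2 => qval q1 != qval q2) rs) rs].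
Proof. by []. Qed.

Lemma qsup_past_rd_val k w h (t : seq Q) g :
  g \in t -> past_rd_val k w g -> past_rd_val k w (qsup h t).
Proof.
move=> gt; rewrite /past_rd_val; have [-> _ -> ->] := qsupE h t.
set M := foldl (@qmax _ V) h t.
have gin : g \in h :: t by rewrite inE gt orbT.
have := rdlvl_le_foldl_qmax gin; rewrite -/M /rdlvl_le.
case/orP => [lt|/andP[/eqP e _]].
  by case/orP => [/(ltn_trans)->|/andP[/eqP <- _]]; rewrite ?lt.
rewrite -e; case/orP => [->//|/andP[/eqP gk gcv]]; rewrite gk ltnn eqxx /=.
set rs := [seq q <- h :: t | rd q == k].
have grs : g \in rs by rewrite mem_filter gk eqxx gin.
have Mrs : M \in rs by rewrite mem_filter -e gk eqxx foldl_qmax_mem.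
case/orP: gcv => [gc|/eqP gw].
  by apply/orP; left; apply/orP; left; apply/hasP; exists g.
case Mw: (qval M == w); first by rewrite orbT.
(* M and g are two elements of the top round carrying distinct values *)
apply/orP; left; apply/orP; right; apply/hasP; exists M => //.
by apply/hasP; exists g => //; rewrite gw Mw.
Qed.

Lemma qsup_past_rd_up k h (t : seq Q) g :
  g \in t -> past_rd_up k g -> past_rd_up k (qsup h t).
Proof.
move=> gt; rewrite /past_rd_up; have [-> -> _ _] := qsupE h t.
have gin : g \in h :: t by rewrite inE gt orbT.
have := rdlvl_le_foldl_qmax gin; rewrite /rdlvl_le.
case/orP => [lt|/andP[/eqP e gM]].
  by case/orP => [/(ltn_trans)->|/andP[/eqP <- _]]; rewrite ?lt.
by rewrite -e; case/orP => [->//|/andP[-> /(implyP gM)->]]; rewrite orbT.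
Qed.

End QuadOrder.

Section Execution.
Set Implicit Arguments. Unset Strict Implicit.
Local Open Scope nat_scope.
Variables (d : Order.disp_t) (V : orderType d) (bot : V).
Variables (n : nat) (n_pos : 0 < n) (prop : 'I_n -> V) (sched : nat -> 'I_n).

Local Notation Q := (quad V).
Local Notation C t := (config_at bot prop sched t).

Definition uniform t (z : Q) := forall i : 'I_n, REG (C t) i = z.

Lemma common_Some (view : regs V n) z : common view = Some z -> forall i, view i = z.
Proof.
rewrite /common; case E: [seq view i | i <- enum 'I_n] => [|q s] //.
case: ifP => // /allP H [<-] i; apply/eqP/H; rewrite -E; apply: map_f.
by rewrite mem_enum.
Qed.

Lemma after_snapshot_Wr v (view : regs V n) x q : after_snapshot v view = Wr x q ->
  (exists z, [/\ forall i, view i = z, rd q = (rd z).+1, qval q = qval z &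
              lvl q -> ~~ lvl z /\ ~~ cfl z]) \/
  q = qsup (mkq 1 down false v) [seq view i | i <- enum 'I_n].
Proof.
rewrite /after_snapshot; case E: (common view) => [z|]; last by case=> _ <-; right.
have Hz := common_Some E.
case: ifP => // H1; case: ifP => H2.
  by case=> _ <-; left; exists z; split=> //; move: H2 => /andP[/andP[_ ->] ->].
by case: ifP => _ [_ <-]; [left; exists z|right].
Qed.

Definition snapshot_closed (P : Q -> bool) :=
  forall v (view : regs V n), (exists i, P (view i)) ->
    forall x q, after_snapshot v view = Wr x q -> P q.

Lemma snapshot_closed_of_qsup (P : Q -> bool) k :
  (forall q, P q -> k <= rd q) -> (forall q, k < rd q -> P q) ->
  (forall h (t : seq Q) g, g \in t -> P g -> P (qsup h t)) -> snapshot_closed P.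
Proof.
move=> Pk kP Psup v view [i Pi] x q /after_snapshot_Wr [[z [Hz rdq _ _]]|->].
  by apply: kP; rewrite rdq ltnS -(Hz i); apply: Pk.
by apply: Psup Pi; apply: map_f; rewrite mem_enum.
Qed.

Lemma snapshot_closed_past_rd_val k w : snapshot_closed (past_rd_val k w).
Proof.
apply: (@snapshot_closed_of_qsup _ k) => [q|q kq|]; last exact: qsup_past_rd_val.
  by case/orP=> [/ltnW//|/andP[/eqP -> _]].
by rewrite /past_rd_val kq.
Qed.

Lemma snapshot_closed_past_rd_up k : snapshot_closed (past_rd_up k).
Proof.
apply: (@snapshot_closed_of_qsup _ k) => [q|q kq|]; last exact: qsup_past_rd_up.
  by case/orP=> [/ltnW//|/andP[/eqP -> _]].
by rewrite /past_rd_up kq.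
Qed.

Section Persistence.
Variable P : Q -> bool.
Hypothesis P_closed : snapshot_closed P.

Definition pending_bad (s : pstate V) := if s is Wr _ q then ~~ P q else false.

Definition n_pending_bad (c : config V n) := #|[pred p | pending_bad (PC c p)]|.
Definition n_good (c : config V n) := #|[pred i | P (REG c i)]|.

Lemma exists_not_pending_bad t :
  (exists i, P (REG (C t) i)) -> exists p, ~~ pending_bad (PC (C t) p).
Proof.
elim: t => [|t IH] /=; first by move=> _; exists (Ordinal n_pos).
rewrite /step; case E: (PC (C t) (sched t)) => [|x q|w] /= Pex; last exact: IH.
  exists (sched t); rewrite eqxx.
  by case E2: (after_snapshot _ _) => [|x q|w] //=; rewrite negbK (P_closed Pex E2).
by exists (sched t); rewrite eqxx.
Qed.

Lemma step_pending_bad_lt_good p c : n_pending_bad c < n_good c ->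
  n_pending_bad (step prop p c) < n_good (step prop p c).
Proof.
rewrite /n_pending_bad /n_good /step.
case E: (PC c p) => [|x q|w] //= lt_bad_good.
  set bad := [pred j | _]; suff -> : #|bad| = #|[pred j | pending_bad (PC c j)]| by [].
  apply: eq_card => j; rewrite !inE; case: eqP => // ->; rewrite E /=.
  case E2: (after_snapshot _ _) => [|y r|w] //=; rewrite (P_closed _ E2) //.
  by case/card_gt0P: (leq_ltn_trans (leq0n _) lt_bad_good) => i; exists i.
set bad := [pred j | pending_bad (PC c j)] in lt_bad_good *.
set good := [pred i | P (REG c i)] in lt_bad_good *.
set bad' := [pred j | _]; set good' := [pred i | _].
have bad'_bad : #|bad'| + ~~ P q = #|bad|.
  rewrite [RHS](cardD1 p) [p \in bad]inE E /= addnC; congr (_ + _).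
  by apply: eq_card => j; rewrite !inE; case: eqP.
have good_good' : #|good| <= #|good'| + ~~ P q.
  case Pq: (P q).
    by rewrite addn0; apply: subset_leq_card; apply/subsetP => j; rewrite !inE; case: eqP.
  (* the write destroys at most the one good register it overwrites *)
  case: (ltnP x n) => hx.
    rewrite (cardD1 (Ordinal hx)) addnC leq_add ?leq_b1 //.
    apply: subset_leq_card; apply/subsetP => j; rewrite !inE.
    by case/andP => /eqP jx Pj; case: eqP => // ej; case: jx; apply: val_inj.
  rewrite addn1 ltnW // ltnS; apply: subset_leq_card; apply/subsetP => j; rewrite !inE.
  by case: eqP => // ej; move: (ltn_ord j); rewrite ej ltnNge hx.
by rewrite -(ltn_add2r (~~ P q)) bad'_bad (leq_trans lt_bad_good).
Qed.

Lemma pending_bad_lt_good tau t : (forall i, P (REG (C tau) i)) -> tau <= t ->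
  n_pending_bad (C t) < n_good (C t).
Proof.
move=> allP; have base : n_pending_bad (C tau) < n_good (C tau).
  have -> : n_good (C tau) = n.
    by rewrite /n_good -[RHS]card_ord; apply: eq_card => i; rewrite !inE allP.
  have [p p_ok] := exists_not_pending_bad (ex_intro _ (Ordinal n_pos) (allP _)).
  rewrite /n_pending_bad -[X in _ < X]card_ord.
  rewrite -(cardC [pred j | pending_bad (PC (C tau) j)]) -addn1 leq_add2l.
  by apply/card_gt0P; exists p; rewrite !inE.
elim: t => [|t IH]; first by rewrite leqn0 => /eqP <-.
by rewrite leq_eqVlt ltnS => /orP[/eqP <- //|/IH]; apply: step_pending_bad_lt_good.
Qed.

Lemma uniform_persistent tau z t z' :
  uniform tau z -> P z -> tau <= t -> uniform t z' -> P z'.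
Proof.
move=> unif_z Pz le_tau_t unif_z'.
have := pending_bad_lt_good (fun i => etrans (congr1 P (unif_z i)) Pz) le_tau_t.
by case/(leq_ltn_trans (leq0n _))/card_gt0P => i; rewrite inE unif_z'.
Qed.

End Persistence.

Definition has_origin t (q : Q) : Prop :=
  (rd q <= 1 /\ lvl q = down) \/
  exists s z, [/\ s <= t, uniform s z, rd q = (rd z).+1, qval q = qval z &
                 lvl q -> ~~ lvl z /\ ~~ cfl z].

Lemma has_origin_mono t t' q : t <= t' -> has_origin t q -> has_origin t' q.
Proof.
move=> le_t [q01|[s [z [le_s]]]]; first by left.
by right; exists s, z; split=> //; apply: leq_trans le_t.
Qed.

Lemma has_origin_qsup t v (r : seq Q) :
  (forall q, q \in r -> has_origin t q) -> has_origin t (qsup (mkq 1 down false v) r).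
Proof.
move=> r_orig; rewrite /has_origin; have [-> -> -> _] := qsupE (mkq 1 down false v) r.
by case/orP: (foldl_qmax_mem (mkq 1 down false v) r) => [/eqP ->|/r_orig]; [left|].
Qed.

Lemma has_origin_invariant t :
  (forall i, has_origin t (REG (C t) i)) /\
  (forall p x q, PC (C t) p = Wr x q -> has_origin t q).
Proof.
elim: t => [|t [reg_orig pc_orig]]; first by split=> [i|p x q //]; left.
have mono q : has_origin t q -> has_origin t.+1 q by apply: has_origin_mono.
rewrite /= /step; case E: (PC (C t) (sched t)) => [|x q|w] /=.
- split=> [i|p x q]; first exact: mono.
  case: eqP => _; last by move/pc_orig/mono.
  case/after_snapshot_Wr => [[z [? ? ? ?]]|->]; first by right; exists t, z.
  by apply/mono/has_origin_qsup => _ /mapP[i _ ->].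
- split=> [i|p x' q']; first by case: eqP => _; apply: mono; [apply: pc_orig E|].
  by case: eqP => // _ /pc_orig/mono.
- by split=> [i|p x q /pc_orig]; apply: mono.
Qed.

Lemma uniform_has_origin t z : uniform t z -> has_origin t z.
Proof.
by move=> unif_z; rewrite -(unif_z (Ordinal n_pos)); case: (has_origin_invariant t).
Qed.

Lemma uniform_up_origin tau X : uniform tau X -> lvl X ->
  exists s z, [/\ s <= tau, uniform s z, rd X = (rd z).+1, qval X = qval z &
                 ~~ lvl z /\ ~~ cfl z].
Proof.
move=> /uniform_has_origin [[_ lX]|[s [z [? ? ? ? orig]]]] upX; first by rewrite lX in upX.
by exists s, z; split=> //; apply: orig.
Qed.

Lemma uniform_val_eq s z s' z' : uniform s z -> uniform s' z' -> rd z = rd z' ->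
  ~~ cfl z -> ~~ cfl z' -> qval z = qval z'.
Proof.
wlog le_s : s z s' z' / s <= s'.
  move=> W unif_z unif_z' e c c'; case: (leqP s s') => [le|/ltnW le].
    exact: W le unif_z unif_z' e c c'.
  exact/esym/(W s' z' s z le unif_z' unif_z (esym e) c' c).
move=> unif_z unif_z' e c c'.
have := uniform_persistent (snapshot_closed_past_rd_val (k := rd z) (w := qval z))
  unif_z _ le_s unif_z'.
rewrite /past_rd_val e ltnn eqxx /= (negbTE c') => /(_ _)/eqP -> //.
by rewrite eqxx orbT.
Qed.

Lemma uniform_val_before tau X s Y : uniform tau X -> ~~ cfl X -> uniform s Y ->
  s <= tau -> rd X <= rd Y -> qval Y = qval X.
Proof.
move=> unif_X cX unif_Y le_s le_rd.
have := uniform_persistent (snapshot_closed_past_rd_val (k := rd Y) (w := qval Y))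
  unif_Y _ le_s unif_X.
rewrite /past_rd_val ltnn !eqxx orbT ltnNge le_rd (negbTE cX) /=.
by move=> /(_ isT) /andP[_ /eqP].
Qed.

Lemma uniform_val_after tau X : uniform tau X -> lvl X -> ~~ cfl X ->
  forall t Y, uniform t Y -> rd X <= rd Y -> qval Y = qval X.
Proof.
move=> unif_X lX cX t Y.
have [k] := ubnP (rd Y); elim: k t Y => // k IH t Y ltYk unif_Y le_rd.
case: (leqP t tau) => [le_t|lt_tau].
  exact: uniform_val_before unif_X cX unif_Y le_t le_rd.
have [sx [zx [_ unif_zx rdX vX [_ czx]]]] := uniform_up_origin unif_X lX.
case: (ltngtP (rd X) (rd Y)) le_rd => // [lt_rd|eq_rd] _.
  case: (uniform_has_origin unif_Y) => [[rdY _]|[s [z [_ unif_z rdY vY _]]]].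
    by move: (leq_trans lt_rd rdY); rewrite rdX.
  by rewrite vY; apply: (IH s z); rewrite // -ltnS -rdY.
have lY : lvl Y.
  have := uniform_persistent (snapshot_closed_past_rd_up (k := rd X))
    unif_X _ (ltnW lt_tau) unif_Y.
  by rewrite /past_rd_up -eq_rd ltnn eqxx lX => /(_ isT).
have [s [z [_ unif_z rdY vY [_ cz]]]] := uniform_up_origin unif_Y lY.
rewrite vY vX; apply: uniform_val_eq unif_z unif_zx _ cz czx.
by apply: succn_inj; rewrite -rdY -rdX eq_rd.
Qed.

End Execution.

Theorem lemma10 (d : Order.disp_t) (V : orderType d) (bot : V)
  (bot_least : forall v : V, bot <= v)
  (n : nat) (n_pos : (0 < n)%N)
  (prop : 'I_n -> V) (sched : nat -> 'I_n)
  (tau tau' : nat) (X Y : quad V) :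
  (forall i : 'I_n, REG (config_at bot prop sched tau) i = X) ->
  lvl X = up -> cfl X = false ->
  (forall i : 'I_n, REG (config_at bot prop sched tau') i = Y) ->
  (rd X <= rd Y)%N ->
  qval Y = qval X.
Proof.
move=> unif_X lX cX unif_Y le_rd.
by apply: (uniform_val_after n_pos unif_X _ _ unif_Y le_rd); rewrite ?lX ?cX.
Qed.
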